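(* For every function $f : X \to \mathbb{R}$ (with no measurability assumption), the game $\Gamma'(f)$ is determined.
   Context: Let $A$ be a non-empty countable set and $T$ a pruned tree on $A$ (a set of finite sequences of elements of $A$, closed under initial segments, in which every sequence has a proper extension in $T$). Let $X$ be the set of infinite branches of $T$, with the topology generated by the cylinder sets $O(s) = \{x \in X : s \text{ is an initial segment of } x\}$, $s \in T$. The game $\Gamma'(f)$: Player I and Player II alternate, Player I moving first; Player I plays $x_0, x_1, \dots \in A$ subject to $(x_0,\dots,x_t) \in T$ for all $t$, and after each move $x_t$ Player II plays a pair of reals $(v_t,w_t)$; Player II wins iff $f(x_0,x_1,\dots) = \limsup_t v_t = \liminf_t w_t$; otherwise Player I wins. Determined means one of the players has a winning strategy. *)

From Stdlib Require Import Reals List.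
From Coquelicot Require Import Coquelicot.
Import ListNotations.
Open Scope R_scope.

(* Finite sequences are lists, (x_0, ..., x_{n-1}) = [x_0; ...; x_{n-1}]. *)

Definition countable_set (A : Type) : Prop :=
  exists g : A -> nat, forall a b, g a = g b -> a = b.

Definition is_tree {A : Type} (T : list A -> Prop) : Prop :=
  forall s t : list A, T (s ++ t) -> T s.

(* T is pruned: every sequence in T has a proper extension in T
   (equivalently, a one-step extension, since T is closed under initial segments;
   we state it literally). *)
Definition is_pruned {A : Type} (T : list A -> Prop) : Prop :=
  forall s, T s -> exists t, t <> [] /\ T (s ++ t).

Definition prefix {A : Type} (x : nat -> A) (n : nat) : list A :=
  map x (seq 0 n).

Definition branch {A : Type} (T : list A -> Prop) (x : nat -> A) : Prop :=
  forall n, T (prefix x n).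

Definition Branches {A : Type} (T : list A -> Prop) : Type :=
  { x : nat -> A | branch T x }.

Definition hist {A : Type} (x : nat -> A) (v w : nat -> R) (n : nat)
  : list (A * (R * R)) :=
  map (fun i => (x i, (v i, w i))) (seq 0 n).

(* Strategies (full information). Player I: history -> next move x_t.
   Player II: history of previous rounds and current move x_t -> (v_t, w_t). *)
Definition stratI (A : Type) := list (A * (R * R)) -> A.
Definition stratII (A : Type) := list (A * (R * R)) -> A -> R * R.

Definition consistentI {A : Type} (s : stratI A) x v w : Prop :=
  forall n, x n = s (hist x v w n).

Definition consistentII {A : Type} (s : stratII A) x v w : Prop :=
  forall n, (v n, w n) = s (hist x v w n) (x n).

Definition II_wins_run {A : Type} (T : list A -> Prop) (f : Branches T -> R)
  (x : nat -> A) (v w : nat -> R) : Prop :=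
  forall h : branch T x,
    LimSup_seq v = Finite (f (exist _ x h)) /\
    LimInf_seq w = Finite (f (exist _ x h)).

Definition winningI {A : Type} (T : list A -> Prop) (f : Branches T -> R)
  (s : stratI A) : Prop :=
  forall x v w, consistentI s x v w -> branch T x /\ ~ II_wins_run T f x v w.

Definition winningII {A : Type} (T : list A -> Prop) (f : Branches T -> R)
  (s : stratII A) : Prop :=
  forall x v w, branch T x -> consistentII s x v w -> II_wins_run T f x v w.

Definition Gamma'_determined {A : Type} (T : list A -> Prop)
  (f : Branches T -> R) : Prop :=
  (exists s, winningI T f s) \/ (exists s, winningII T f s).

(* For a precision e > 0, an e-approximation scheme at a node s ([Approx]) is a
   guess for f together with a well-founded family of revision nodes, each
   carrying a new scheme.  Followed along a branch x, a scheme revises its guess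
   only finitely often and ends within e of f(x) ([run_settles]).

   - If the root carries a 2^-n-scheme for every n, Player II follows all of them
     simultaneously and plays the clipped telescoping refinement of the level
     guesses ([refine]); it converges to f(x), so II wins ([sigmaII_winning]).
   - Otherwise the root is bad for some e.  From a bad node one can escape along
     a branch that stays bad to an f-value more than e away from any prescribed
     value ([bad_escape]).  Player I follows such a branch p and escapes as soon
     as Player II's answers v and w have come within e/4 of f(p) from both sides.
     If II won, escapes would happen infinitely often, and late ones would start
     within e/2 of f(x) while jumping by more than e ([sigmaI_winning]). *)

From Stdlib Require Import Reals List Lra Lia Classical ClassicalEpsilon
  FunctionalExtensionality ProofIrrelevance Arith.
From Coquelicot Require Import Coquelicot.
Import ListNotations.
Open Scope R_scope.

Lemma prefix_S {B : Type} (x : nat -> B) (n : nat) :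
  prefix x (S n) = prefix x n ++ [x n].
Proof. unfold prefix. rewrite seq_S, map_app. reflexivity. Qed.

Lemma prefix_length {B : Type} (x : nat -> B) (n : nat) : length (prefix x n) = n.
Proof. unfold prefix. rewrite length_map, length_seq. reflexivity. Qed.

Lemma prefix_agree {B : Type} (x y : nat -> B) (n : nat) :
  prefix x n = prefix y n <-> forall k, (k < n)%nat -> x k = y k.
Proof.
  induction n as [|n IH]; [split; [intros _ k Hk; lia | reflexivity]|].
  rewrite !prefix_S. split.
  - intros Hxy k Hk. apply app_inj_tail in Hxy as [Hn Hlast].
    destruct (Nat.eq_dec k n) as [->|Hkn]; [exact Hlast|].
    apply IH; [exact Hn | lia].
  - intros Hxy. f_equal; [apply IH; intros k Hk; apply Hxy; lia | f_equal; apply Hxy; lia].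
Qed.

Lemma branch_ext {A : Type} (T : list A -> Prop) (x : nat -> A) (hx : branch T x)
  (p : Branches T) : (forall t, x t = proj1_sig p t) -> exist _ x hx = p.
Proof.
  destruct p as [y hy]; simpl. intros Hxy.
  assert (x = y) as <- by (apply functional_extensionality; exact Hxy).
  f_equal. apply proof_irrelevance.
Qed.

Lemma hist_S {A : Type} (x : nat -> A) (v w : nat -> R) (t : nat) :
  hist x v w (S t) = hist x v w t ++ [(x t, (v t, w t))].
Proof. unfold hist. rewrite seq_S, map_app. reflexivity. Qed.

Lemma hist_length {A : Type} (x : nat -> A) (v w : nat -> R) (t : nat) :
  length (hist x v w t) = t.
Proof. unfold hist. rewrite length_map, length_seq. reflexivity. Qed.

Lemma hist_nth_error {A : Type} (x : nat -> A) (v w : nat -> R) (n k : nat) :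
  nth_error (hist x v w n) k = if (k <? n)%nat then Some (x k, (v k, w k)) else None.
Proof.
  unfold hist. rewrite nth_error_map, nth_error_seq.
  destruct (k <? n)%nat; reflexivity.
Qed.

Lemma hist_moves {A : Type} (x : nat -> A) (v w : nat -> R) (t : nat) :
  map fst (hist x v w t) = prefix x t.
Proof. unfold hist, prefix. rewrite map_map. reflexivity. Qed.

Lemma least_witness (P : nat -> Prop) :
  (exists n, P n) -> exists n, P n /\ forall k, P k -> (n <= k)%nat.
Proof.
  intros Hex.
  destruct (dec_inh_nat_subset_has_unique_least_element P (fun n => classic (P n)) Hex)
    as [n [[Pn Hmin] _]].
  eauto.
Qed.

Definition E (n : nat) : R := (/ 2) ^ n.

Lemma E_pos (n : nat) : 0 < E n.
Proof. unfold E. apply pow_lt. lra. Qed.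

Lemma E_S (n : nat) : E (S n) = E n / 2.
Proof. unfold E. simpl. lra. Qed.

Lemma E_small (eps : R) : 0 < eps -> exists N, E N < eps.
Proof.
  intros Heps.
  destruct (pow_lt_1_zero (/ 2) ltac:(rewrite Rabs_pos_eq; lra) eps Heps) as [N HN].
  exists N. specialize (HN N (le_n N)).
  rewrite Rabs_pos_eq in HN; [exact HN | apply Rlt_le, E_pos].
Qed.

Definition clip (n : nat) (z : R) : R := Rmax (- (2 * E n)) (Rmin (2 * E n) z).

Lemma clip_bound (n : nat) (z : R) : Rabs (clip n z) <= 2 * E n.
Proof.
  pose proof (E_pos n). apply Rabs_le. unfold clip, Rmax, Rmin.
  repeat destruct Rle_dec; lra.
Qed.

Lemma clip_id (n : nat) (z : R) : Rabs z <= 2 * E n -> clip n z = z.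
Proof.
  intros Hz. apply Rabs_le_between in Hz. unfold clip, Rmax, Rmin.
  repeat destruct Rle_dec; lra.
Qed.

(* [refine a k] moves from [a 0] towards [a 1], ..., [a k], never by more than
   [2 E n] at step [n]: it equals [a k] while the guesses are as precise as
   they should be, and it cannot drift far whatever the later guesses are. *)
Fixpoint refine (a : nat -> R) (k : nat) : R :=
  match k with
  | O => a O
  | S k => refine a k + clip k (a (S k) - refine a k)
  end.

Lemma refine_exact (a : nat -> R) (L : R) (N : nat) :
  (forall n, (n <= N)%nat -> Rabs (L - a n) <= E n) ->
  forall n, (n <= N)%nat -> refine a n = a n.
Proof.
  intros Ha. induction n as [|n IH]; intros Hn; [reflexivity|].
  simpl. rewrite IH by lia. rewrite clip_id; [ring|].
  pose proof (Ha n ltac:(lia)) as Hn0. pose proof (Ha (S n) Hn) as Hn1.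
  rewrite E_S in Hn1. apply Rabs_le_between in Hn0, Hn1. pose proof (E_pos n).
  apply Rabs_le. lra.
Qed.

Lemma refine_drift (a : nat -> R) (N j : nat) :
  Rabs (refine a (N + j) - refine a N) <= 4 * E N - 4 * E (N + j).
Proof.
  induction j as [|j IH].
  - rewrite Nat.add_0_r. unfold Rminus. rewrite !Rplus_opp_r, Rabs_R0. lra.
  - rewrite Nat.add_succ_r. simpl refine.
    pose proof (clip_bound (N + j) (a (S (N + j)) - refine a (N + j))) as Hclip.
    rewrite E_S. apply Rabs_le_between in IH, Hclip. apply Rabs_le. lra.
Qed.

Lemma refine_close (a : nat -> R) (L : R) (N : nat) :
  (forall n, (n <= N)%nat -> Rabs (L - a n) <= E n) ->
  forall k, (N <= k)%nat -> Rabs (refine a k - L) <= 5 * E N.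
Proof.
  intros Ha k Hk.
  pose proof (refine_drift a N (k - N)) as Hdrift.
  replace (N + (k - N))%nat with k in Hdrift by lia.
  rewrite (refine_exact a L N Ha N (le_n N)) in Hdrift.
  pose proof (Ha N (le_n N)) as HN. pose proof (E_pos k).
  apply Rabs_le_between in Hdrift, HN. apply Rabs_le. lra.
Qed.

(** * Approximation schemes *)

Section Schemes.
Variables (A : Type) (T : list A -> Prop) (f : Branches T -> R).

(* An [e]-approximation scheme at node [s] consists of a guess [c], correct up
   to [e] on every branch through [s] that never meets the set [U] of revision
   nodes again, together with schemes at all revision nodes.  Since [Approx] is
   inductive, along any branch the guess is revised only finitely often. *)
Inductive Approx (e : R) : list A -> Type :=
| approx_mk (s : list A) (c : R) (U : list A -> Prop) :
    (forall x (hx : branch T x), prefix x (length s) = s ->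
       (forall m, (length s < m)%nat -> ~ U (prefix x m)) ->
       Rabs (f (exist _ x hx) - c) <= e) ->
    (forall u, U u -> Approx e u) -> Approx e s.

Definition guess {e s} (g : Approx e s) : R :=
  match g with approx_mk _ c _ _ _ => c end.

Definition revisions {e s} (g : Approx e s) : list A -> Prop :=
  match g with approx_mk _ _ U _ _ => U end.

Definition revise {e s} (g : Approx e s) : forall u, revisions g u -> Approx e u :=
  match g as g0 return forall u, revisions g0 u -> Approx e u with
  | approx_mk _ _ _ _ sub => sub
  end.

Definition follow {e} (cur : sigT (Approx e)) (u : list A) : sigT (Approx e) :=
  match excluded_middle_informative (revisions (projT2 cur) u) with
  | left H => existT _ u (revise (projT2 cur) u H)
  | right _ => cur
  end.

Lemma follow_keep {e} (cur : sigT (Approx e)) (u : list A) :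
  ~ revisions (projT2 cur) u -> follow cur u = cur.
Proof. intros H. unfold follow. destruct excluded_middle_informative; tauto. Qed.

Lemma follow_switch {e} (cur : sigT (Approx e)) (u : list A)
  (H : revisions (projT2 cur) u) : follow cur u = existT _ u (revise (projT2 cur) u H).
Proof.
  unfold follow. destruct excluded_middle_informative as [H'|]; [|tauto].
  do 2 f_equal. apply proof_irrelevance.
Qed.

Section Following.
Variables (e : R) (x : nat -> A) (hx : branch T x).
Variable run : nat -> sigT (Approx e).
Hypothesis run_S : forall t, run (S t) = follow (run t) (prefix x (S t)).

Lemma run_const (a k : nat) :
  (forall j, (a <= j < a + k)%nat -> ~ revisions (projT2 (run a)) (prefix x (S j))) ->
  run (a + k)%nat = run a.
Proof.
  induction k as [|k IH]; intros Hno; [f_equal; lia|].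
  rewrite Nat.add_succ_r, run_S, IH by (intros j Hj; apply Hno; lia).
  apply follow_keep, Hno. lia.
Qed.

Lemma run_settles (s : list A) (g : Approx e s) :
  run (length s) = existT _ s g -> prefix x (length s) = s ->
  exists N c, Rabs (f (exist _ x hx) - c) <= e /\
    forall t, (N <= t)%nat -> guess (projT2 (run t)) = c.
Proof.
  induction g as [s c U Hc sub IH]; intros Hrun Hx.
  destruct (classic (exists m, (length s < m)%nat /\ U (prefix x m))) as [Hrev|Hnorev].
  - destruct (least_witness _ Hrev) as [m [[Hm HU] Hmin]].
    destruct m as [|m]; [lia|].
    assert (Hkeep : run m = existT _ s (approx_mk e s c U Hc sub)).
    { replace m with (length s + (m - length s))%nat by lia.
      rewrite run_const, Hrun; [reflexivity|].
      rewrite Hrun. intros j Hj HUj.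
      assert (S m <= S j)%nat by (apply Hmin; split; [lia | exact HUj]). lia. }
    assert (Hnext : run (S m) = existT _ (prefix x (S m)) (sub (prefix x (S m)) HU)).
    { rewrite run_S, Hkeep. exact (follow_switch (existT _ s (approx_mk e s c U Hc sub)) _ HU). }
    apply (IH _ HU); rewrite prefix_length; [exact Hnext | reflexivity].
  - exists (length s), c. split.
    + apply (Hc x hx Hx). intros m Hm HU. apply Hnorev. eauto.
    + intros t Ht. replace t with (length s + (t - length s))%nat by lia.
      rewrite run_const, Hrun; [reflexivity|].
      rewrite Hrun. intros j Hj HU. apply Hnorev. exists (S j). split; [lia | exact HU].
Qed.

End Following.

Definition Bad (e : R) (s : list A) : Prop := T s /\ ~ inhabited (Approx e s).

(* Otherwise [c],
   with the non-bad nodes as revision nodes, would be a scheme at [s]. *)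
Lemma bad_escape (e : R) (s : list A) (c : R) : Bad e s ->
  exists x (hx : branch T x), prefix x (length s) = s /\
    (forall m, (length s <= m)%nat -> Bad e (prefix x m)) /\
    e < Rabs (f (exist _ x hx) - c).
Proof.
  intros [HTs Hnone]. apply NNPP. intros Hno. apply Hnone. constructor.
  apply (approx_mk e s c (fun u => inhabited (Approx e u))).
  - intros x hx Hx Hgood. apply Rnot_lt_le. intros Hfar. apply Hno.
    exists x, hx. split; [exact Hx|]. split; [|exact Hfar].
    intros m Hm. split; [apply hx|].
    destruct (Nat.eq_dec m (length s)) as [->|Hne]; [rewrite Hx; exact Hnone|].
    apply Hgood. lia.
  - intros u Hu. exact (epsilon Hu (fun _ => True)).
Qed.

Lemma approx_empty_tree (e : R) : ~ T [] -> inhabited (Approx e []).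
Proof.
  intros HT. constructor. apply (approx_mk e [] 0 (fun _ => False)).
  - intros x hx. exfalso. exact (HT (hx O)).
  - intros u [].
Qed.

(** * Player I wins when the root is bad *)

Section PlayerI.
Variables (e : R) (p0 : Branches T).
Hypothesis e_pos : 0 < e.
Hypothesis p0_bad : forall m, Bad e (prefix (proj1_sig p0) m).

Definition margin : R := e / 4.

Lemma margin_pos : 0 < margin.
Proof. unfold margin. lra. Qed.

Definition escapes (p : Branches T) (t : nat) (q : Branches T) : Prop :=
  (forall k, (k < t)%nat -> proj1_sig q k = proj1_sig p k) /\
  (forall m, (t <= m)%nat -> Bad e (prefix (proj1_sig q) m)) /\
  e < Rabs (f q - f p).

Definition escape (p : Branches T) (t : nat) : Branches T :=
  epsilon (inhabits p) (escapes p t).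

Lemma escape_spec (p : Branches T) (t : nat) :
  Bad e (prefix (proj1_sig p) t) -> escapes p t (escape p t).
Proof.
  intros Hbad. unfold escape. apply epsilon_spec.
  destruct (bad_escape e _ (f p) Hbad) as [y [hy [Hy [Hbad' Hfar]]]].
  rewrite prefix_length in Hy, Hbad'.
  exists (exist _ y hy). split; [|split]; [|exact Hbad' | exact Hfar].
  apply prefix_agree, Hy.
Qed.

(* Player I follows a current branch [p], installed at time [s].  Player II's
   guesses become "armed" once some [v_t'] with [t' >= s] exceeds [f p - margin];
   when, after that, [w_t] drops below [f p + margin], Player I escapes from
   [p] at the current node to a branch whose value is more than [e] away. *)
Definition armed (h : list (A * (R * R))) (p : Branches T) (s : nat) : Prop :=
  exists t a b c, (s <= t)%nat /\ nth_error h t = Some (a, (b, c)) /\ f p - margin < b.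

(* Player I's state (current branch, time it was installed) after the history
   [rev r]; the history is stored in reverse so that rounds are added in front. *)
Fixpoint state_rev (r : list (A * (R * R))) : Branches T * nat :=
  match r with
  | [] => (p0, O)
  | (_, (_, wt)) :: r' =>
      let st := state_rev r' in
      if excluded_middle_informative (armed (rev r) (fst st) (snd st) /\ wt < f (fst st) + margin)
      then (escape (fst st) (length r), length r)
      else st
  end.

Definition sigmaI : stratI A := fun h => proj1_sig (fst (state_rev (rev h))) (length h).

Section Run.
Variables (x : nat -> A) (v w : nat -> R).
Hypothesis x_follows : consistentI sigmaI x v w.

Definition state (t : nat) : Branches T * nat := state_rev (rev (hist x v w t)).
Definition current (t : nat) : Branches T := fst (state t).
Definition since (t : nat) : nat := snd (state t).
Definition switch (t : nat) : Prop :=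
  (exists t', (since t <= t' <= t)%nat /\ f (current t) - margin < v t') /\
  w t < f (current t) + margin.

Lemma armed_hist (n : nat) (p : Branches T) (s : nat) :
  armed (hist x v w (S n)) p s <-> exists t', (s <= t' <= n)%nat /\ f p - margin < v t'.
Proof.
  unfold armed. setoid_rewrite hist_nth_error. split.
  - intros (t' & a & b & c & Hs & Hnth & Hb). exists t'.
    destruct (Nat.ltb_spec t' (S n)) as [Hlt|]; [|discriminate].
    injection Hnth as <- <- <-. split; [lia | exact Hb].
  - intros (t' & Ht' & Hv). exists t', (x t'), (v t'), (w t').
    destruct (Nat.ltb_spec t' (S n)); [|lia]. split; [lia | split; [reflexivity | exact Hv]].
Qed.

Lemma state_S (t : nat) : state (S t) =
  if excluded_middle_informative (switch t)
  then (escape (current t) (S t), S t) else state t.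
Proof.
  unfold state at 1. rewrite hist_S, rev_app_distr. cbn [rev app state_rev].
  rewrite rev_involutive, <- hist_S.
  replace (length _) with (S t) by (simpl; rewrite length_rev, hist_length; reflexivity).
  fold (state t). unfold switch, current, since.
  destruct excluded_middle_informative as [H1|H1], excluded_middle_informative as [H2|H2];
    try reflexivity; exfalso; [apply H2 | apply H1]; rewrite armed_hist in *; tauto.
Qed.

Lemma state_switch (t : nat) : switch t -> state (S t) = (escape (current t) (S t), S t).
Proof. intros H. rewrite state_S. destruct excluded_middle_informative; tauto. Qed.

Lemma state_keep (t : nat) : ~ switch t -> state (S t) = state t.
Proof. intros H. rewrite state_S. destruct excluded_middle_informative; tauto. Qed.

Lemma move_current (t : nat) : x t = proj1_sig (current t) t.
Proof. rewrite (x_follows t). unfold sigmaI. rewrite hist_length. reflexivity. Qed.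

Lemma current_invariant (t : nat) :
  (forall k, (k < t)%nat -> proj1_sig (current t) k = x k) /\
  (forall m, (t <= m)%nat -> Bad e (prefix (proj1_sig (current t)) m)).
Proof.
  induction t as [|t [Hagree Hbad]]; [split; [intros; lia | intros m _; apply p0_bad]|].
  unfold current at 1 2. destruct (classic (switch t)) as [Hsw|Hsw].
  - rewrite state_switch by exact Hsw. simpl.
    destruct (escape_spec (current t) (S t) (Hbad (S t) ltac:(lia))) as [Hq [Hbadq _]].
    split; [|exact Hbadq]. intros k Hk. rewrite Hq by exact Hk.
    destruct (Nat.eq_dec k t) as [->|]; [symmetry; apply move_current | apply Hagree; lia].
  - rewrite state_keep by exact Hsw. split; [|intros m Hm; apply Hbad; lia].
    intros k Hk. destruct (Nat.eq_dec k t) as [->|];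
      [symmetry; apply move_current | apply Hagree; lia].
Qed.

Lemma play_is_branch : branch T x.
Proof.
  intros n. destruct (current_invariant n) as [Hagree Hbad].
  replace (prefix x n) with (prefix (proj1_sig (current n)) n)
    by (apply prefix_agree; exact Hagree).
  apply (Hbad n (le_n n)).
Qed.

Lemma state_const (a k : nat) :
  (forall j, (a <= j < a + k)%nat -> ~ switch j) -> state (a + k)%nat = state a.
Proof.
  induction k as [|k IH]; intros Hno; [f_equal; lia|].
  rewrite Nat.add_succ_r, state_keep.
  - apply IH. intros j Hj. apply Hno. lia.
  - apply Hno. lia.
Qed.

Lemma next_switch : (forall N, exists t, (N <= t)%nat /\ switch t) ->
  forall a, exists b, (a <= b)%nat /\ switch b /\ state b = state a.
Proof.
  intros Hinf a. destruct (least_witness (fun t => (a <= t)%nat /\ switch t) (Hinf a))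
    as [b [[Hab Hsw] Hmin]].
  exists b. split; [exact Hab|]. split; [exact Hsw|].
  replace b with (a + (b - a))%nat by lia. apply state_const.
  intros j Hj Hswj. assert (b <= j)%nat by (apply Hmin; split; [lia | exact Hswj]). lia.
Qed.

Section IIWins.
Variable L : R.
Hypothesis L_value : forall p : Branches T, (forall t, x t = proj1_sig p t) -> f p = L.
Hypothesis v_limsup : is_LimSup_seq v L.
Hypothesis w_liminf : is_LimInf_seq w L.

(* Were the escapes to stop, the play would be the final branch [p] with
   [f p = L]; but then [v] and [w] come close to [L] and arm a new escape. *)
Lemma switches_unbounded : forall N, exists t, (N <= t)%nat /\ switch t.
Proof.
  intros N. apply NNPP. intros Hfin.
  assert (Hno : forall j, (N <= j)%nat -> ~ switch j) by eauto.
  assert (Hconst : forall t, (N <= t)%nat -> state t = state N).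
  { intros t Ht. replace t with (N + (t - N))%nat by lia.
    apply state_const. intros j Hj. apply Hno. lia. }
  assert (HL : f (current N) = L).
  { apply L_value. intros t. destruct (Nat.le_gt_cases N t) as [Ht|Ht].
    - rewrite move_current. unfold current. rewrite Hconst by exact Ht. reflexivity.
    - symmetry. apply (proj1 (current_invariant N)). exact Ht. }
  destruct (proj1 (v_limsup (mkposreal _ margin_pos)) (Nat.max N (since N)))
    as [t' [Ht' Hv]].
  destruct (proj1 (w_liminf (mkposreal _ margin_pos)) t') as [t [Ht Hw]].
  simpl in Hv, Hw.
  apply (Hno t); [lia|].
  assert (Hs : state t = state N) by (apply Hconst; lia).
  unfold switch, current, since. rewrite Hs. fold (current N) (since N). rewrite HL.
  split; [exists t'; split; [lia | exact Hv] | exact Hw].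
Qed.

Lemma switch_near : exists N, forall t, switch t -> (N <= since t)%nat ->
  Rabs (f (current t) - L) < 2 * margin.
Proof.
  destruct (proj2 (v_limsup (mkposreal _ margin_pos))) as [N1 HN1].
  destruct (proj2 (w_liminf (mkposreal _ margin_pos))) as [N2 HN2].
  simpl in HN1, HN2. exists (Nat.max N1 N2).
  intros t [(t' & Ht' & Hv) Hw] Hs.
  pose proof (HN1 t' ltac:(lia)). pose proof (HN2 t ltac:(lia)).
  apply Rabs_def1; lra.
Qed.

(* Two consecutive late escapes start from branches within [2 margin] of [L],
   while the second is more than [e = 4 margin] away from the first. *)
Lemma II_cannot_win : False.
Proof.
  destruct switch_near as [N Hnear].
  pose proof (next_switch switches_unbounded) as Hnext.
  destruct (Hnext N) as [t1 [Ht1 [Hsw1 _]]].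
  destruct (Hnext (S t1)) as [t2 [Ht2 [Hsw2 Hst2]]].
  destruct (Hnext (S t2)) as [t3 [Ht3 [Hsw3 Hst3]]].
  rewrite state_switch in Hst2, Hst3 by assumption.
  assert (Hnear2 := Hnear t2 Hsw2 ltac:(unfold since; rewrite Hst2; simpl; lia)).
  assert (Hnear3 := Hnear t3 Hsw3 ltac:(unfold since; rewrite Hst3; simpl; lia)).
  unfold current in Hnear3. rewrite Hst3 in Hnear3. simpl in Hnear3.
  destruct (escape_spec (current t2) (S t2)) as [_ [_ Hfar]].
  { apply (proj2 (current_invariant t2)). lia. }
  apply Rabs_def2 in Hnear2, Hnear3.
  assert (Rabs (f (escape (current t2) (S t2)) - f (current t2)) < e)
    by (apply Rabs_def1; unfold margin in *; lra).
  lra.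
Qed.

End IIWins.
End Run.

Theorem sigmaI_winning : winningI T f sigmaI.
Proof.
  intros x v w Hx. pose proof (play_is_branch x v w Hx) as Hbr.
  split; [exact Hbr|]. intros Hwin. destruct (Hwin Hbr) as [Hsup Hinf].
  destruct (ex_LimSup_seq v) as [l1 Hl1]. rewrite (is_LimSup_seq_unique _ _ Hl1) in Hsup.
  destruct (ex_LimInf_seq w) as [l2 Hl2]. rewrite (is_LimInf_seq_unique _ _ Hl2) in Hinf.
  subst l1 l2. apply (II_cannot_win x v w Hx (f (exist _ x Hbr))); [|assumption..].
  intros p Hp. f_equal. symmetry. apply branch_ext. exact Hp.
Qed.

End PlayerI.

(** * Player II wins when the root carries schemes of every precision *)

Section PlayerII.
Hypothesis schemes : forall n, inhabited (Approx (E n) []).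

Definition root_scheme (n : nat) : Approx (E n) [] := epsilon (schemes n) (fun _ => True).

Fixpoint scheme_rev (n : nat) (r : list A) : sigT (Approx (E n)) :=
  match r with
  | [] => existT _ [] (root_scheme n)
  | a :: r' => follow (scheme_rev n r') (rev (a :: r'))
  end.

Definition level_guess (n : nat) (u : list A) : R := guess (projT2 (scheme_rev n (rev u))).

Definition answer (u : list A) : R := refine (fun n => level_guess n u) (length u).

Definition sigmaII : stratII A :=
  fun h a => (answer (map fst h ++ [a]), answer (map fst h ++ [a])).

Section Play.
Variables (x : nat -> A) (hx : branch T x).

Lemma level_guess_settles (n : nat) : exists N, forall t, (N <= t)%nat ->
  Rabs (f (exist _ x hx) - level_guess n (prefix x t)) <= E n.
Proof.
  set (run := fun t => scheme_rev n (rev (prefix x t))).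
  assert (Hrun : forall t, run (S t) = follow (run t) (prefix x (S t))).
  { intros t. unfold run. rewrite prefix_S at 1. rewrite rev_app_distr. simpl.
    rewrite rev_involutive, <- prefix_S. reflexivity. }
  destruct (run_settles (E n) x hx run Hrun [] (root_scheme n) eq_refl eq_refl)
    as [N [c [Hc Hsettle]]].
  exists N. intros t Ht. unfold level_guess. fold (run t). rewrite Hsettle by exact Ht.
  exact Hc.
Qed.

Lemma level_guesses_settle (N : nat) : exists M, forall t, (M <= t)%nat ->
  forall n, (n <= N)%nat -> Rabs (f (exist _ x hx) - level_guess n (prefix x t)) <= E n.
Proof.
  induction N as [|N [M HM]].
  - destruct (level_guess_settles O) as [M HM]. exists M.
    intros t Ht n Hn. replace n with O by lia. auto.
  - destruct (level_guess_settles (S N)) as [M' HM']. exists (Nat.max M M').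
    intros t Ht n Hn. destruct (Nat.eq_dec n (S N)) as [->|]; [apply HM'; lia|].
    apply HM; lia.
Qed.

Lemma answer_converges :
  is_lim_seq (fun t => answer (prefix x (S t))) (f (exist _ x hx)).
Proof.
  apply is_lim_seq_spec. intros eps.
  destruct (E_small (eps / 5)) as [N HN]; [destruct eps; simpl; lra|].
  destruct (level_guesses_settle N) as [M HM].
  exists (Nat.max M N). intros t Ht. unfold answer. rewrite prefix_length.
  eapply Rle_lt_trans; [apply (refine_close _ _ N) | lra].
  - apply HM. lia.
  - lia.
Qed.

End Play.

Theorem sigmaII_winning : winningII T f sigmaII.
Proof.
  intros x v w hx Hx h.
  assert (Hvw : forall t, v t = answer (prefix x (S t)) /\ w t = answer (prefix x (S t))).
  { intros t. specialize (Hx t). unfold sigmaII in Hx.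
    rewrite hist_moves, <- prefix_S in Hx. injection Hx. auto. }
  pose proof (answer_converges x h) as Hlim.
  assert (Hv : is_lim_seq v (f (exist _ x h)))
    by (eapply is_lim_seq_ext; [|exact Hlim]; intros t; symmetry; apply Hvw).
  assert (Hw : is_lim_seq w (f (exist _ x h)))
    by (eapply is_lim_seq_ext; [|exact Hlim]; intros t; symmetry; apply Hvw).
  split; [apply is_LimSup_seq_unique, is_lim_LimSup_seq, Hv
         | apply is_LimInf_seq_unique, is_lim_LimInf_seq, Hw].
Qed.

End PlayerII.
End Schemes.

Theorem mainTheorem18 (A : Type) (a0 : A) (HA : countable_set A)
  (T : list A -> Prop) (HT : is_tree T) (HP : is_pruned T)
  (f : Branches T -> R) :
  Gamma'_determined T f.
Proof.
  destruct (classic (forall n, inhabited (Approx A T f (E n) []))) as [Hschemes|Hno].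
  - right. exists (sigmaII A T f Hschemes). apply sigmaII_winning.
  - left. apply not_all_ex_not in Hno as [n Hn].
    assert (Hroot : Bad A T f (E n) []).
    { split; [|exact Hn]. apply NNPP. intros HT0. exact (Hn (approx_empty_tree A T f _ HT0)). }
    destruct (bad_escape A T f (E n) [] 0 Hroot) as [p [hp [_ [Hbad _]]]].
    exists (sigmaI A T f (E n) (exist _ p hp)). apply sigmaI_winning; [apply E_pos|].
    intros m. apply Hbad. simpl. lia.
Qed.
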